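(* If $T\in L_{aut}(\mathcal B)$ is a shifted hyperbolic operator, then $\overline{B(T)}$ is an infinite-dimensional closed subspace of $\mathcal B$ and it coincides with the shifted subspace $\Sigma$.
   Context: $\mathcal B$ is a Banach space. $T$ is generalized hyperbolic if there is a decomposition $\mathcal B=E^-\oplus E^+$ into complementary closed subspaces with $T(E^+)\subset E^+$, $T^{-1}(E^-)\subset E^-$, and $T|_{E^+}$, $T^{-1}|_{E^-}$ uniform contractions. $T$ is shifted hyperbolic if it is generalized hyperbolic and the transition subspace $E_0:=E^-\cap T^{-1}(E^+)$ is nonzero. The shifted subspace $\Sigma$ is the smallest closed subspace containing $E_0$ that is invariant under $T$ and $T^{-1}$ (the closure of the span of $\bigcup_{n\in\mathbb Z}T^n(E_0)$). The bounded set $B(T)$ is the set of $x$ for which there exist $K>0$ and strictly increasing sequences of positive integers $(k_n),(m_n)$ with $|T^{k_n}x|<K$ and $|T^{-m_n}x|<K$. *)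

From Stdlib Require Import Reals ZArith.
Open Scope R_scope.

Record Banach := {
  bs :> Type;
  bzero : bs;
  badd : bs -> bs -> bs;
  bopp : bs -> bs;
  bscal : R -> bs -> bs;
  bnorm : bs -> R;
  badd_assoc : forall x y z, badd x (badd y z) = badd (badd x y) z;
  badd_comm : forall x y, badd x y = badd y x;
  badd_0l : forall x, badd bzero x = x;
  badd_oppl : forall x, badd (bopp x) x = bzero;
  bscal_assoc : forall a b x, bscal a (bscal b x) = bscal (a * b) x;
  bscal_1 : forall x, bscal 1 x = x;
  bscal_addv : forall a x y, bscal a (badd x y) = badd (bscal a x) (bscal a y);
  bscal_adds : forall a b x, bscal (a + b) x = badd (bscal a x) (bscal b x);
  bnorm_eq0 : forall x, bnorm x = 0 -> x = bzero;
  bnorm_scal : forall a x, bnorm (bscal a x) = Rabs a * bnorm x;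
  bnorm_triangle : forall x y, bnorm (badd x y) <= bnorm x + bnorm y;
  bcomplete : forall u : nat -> bs,
    (forall eps, 0 < eps -> exists N, forall m n, (N <= m)%nat -> (N <= n)%nat ->
        bnorm (badd (u m) (bopp (u n))) < eps) ->
    exists l, forall eps, 0 < eps -> exists N, forall n, (N <= n)%nat ->
        bnorm (badd (u n) (bopp l)) < eps
}.

Arguments bzero {_}.
Arguments badd {_}.
Arguments bopp {_}.
Arguments bscal {_}.
Arguments bnorm {_}.

Section Defs.
Variable X : Banach.

Definition bsub (x y : X) : X := badd x (bopp y).

Definition is_linear (T : X -> X) : Prop :=
  (forall x y, T (badd x y) = badd (T x) (T y)) /\
  (forall a x, T (bscal a x) = bscal a (T x)).

Definition is_bounded (T : X -> X) : Prop :=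
  exists M, forall x, bnorm (T x) <= M * bnorm x.

Definition in_Laut (T Tinv : X -> X) : Prop :=
  is_linear T /\ is_bounded T /\ is_linear Tinv /\ is_bounded Tinv /\
  (forall x, T (Tinv x) = x) /\ (forall x, Tinv (T x) = x).

Definition zpow (T Tinv : X -> X) (z : Z) : X -> X :=
  match z with
  | Z0 => fun x => x
  | Zpos p => Nat.iter (Pos.to_nat p) T
  | Zneg p => Nat.iter (Pos.to_nat p) Tinv
  end.

Definition is_subspace (S : X -> Prop) : Prop :=
  S bzero /\ (forall x y, S x -> S y -> S (badd x y)) /\
  (forall a x, S x -> S (bscal a x)).

Definition closure (S : X -> Prop) (x : X) : Prop :=
  forall eps, 0 < eps -> exists y, S y /\ bnorm (bsub x y) < eps.

Definition is_closed (S : X -> Prop) : Prop := forall x, closure S x -> S x.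

Definition is_closed_subspace (S : X -> Prop) : Prop :=
  is_subspace S /\ is_closed S.

Inductive span (S : X -> Prop) : X -> Prop :=
  | span_0 : span S bzero
  | span_in : forall x, S x -> span S x
  | span_add : forall x y, span S x -> span S y -> span S (badd x y)
  | span_scal : forall a x, span S x -> span S (bscal a x).

Fixpoint lincomb (c : nat -> R) (v : nat -> X) (n : nat) : X :=
  match n with
  | O => bzero
  | S k => badd (lincomb c v k) (bscal (c k) (v k))
  end.

Definition lin_indep (v : nat -> X) (n : nat) : Prop :=
  forall c : nat -> R, lincomb c v n = bzero -> forall i, (i < n)%nat -> c i = 0.

Definition infinite_dimensional (S : X -> Prop) : Prop :=
  forall n : nat, exists v : nat -> X,
    (forall i, (i < n)%nat -> S (v i)) /\ lin_indep v n.

Definition uniform_contraction_on (T : X -> X) (E : X -> Prop) : Prop :=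
  exists c, 0 <= c /\ c < 1 /\ forall x, E x -> bnorm (T x) <= c * bnorm x.

Definition generalized_hyperbolic_split (T Tinv : X -> X) (Em Ep : X -> Prop) : Prop :=
  is_closed_subspace Em /\ is_closed_subspace Ep /\
  (forall x, Em x -> Ep x -> x = bzero) /\
  (forall x, exists a b, Em a /\ Ep b /\ x = badd a b) /\
  (forall x, Ep x -> Ep (T x)) /\
  (forall x, Em x -> Em (Tinv x)) /\
  uniform_contraction_on T Ep /\
  uniform_contraction_on Tinv Em.

Definition E0 (T : X -> X) (Em Ep : X -> Prop) (x : X) : Prop :=
  Em x /\ Ep (T x).

Definition shifted_hyperbolic_split (T Tinv : X -> X) (Em Ep : X -> Prop) : Prop :=
  generalized_hyperbolic_split T Tinv Em Ep /\
  exists x, E0 T Em Ep x /\ x <> bzero.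

Definition shifted_hyperbolic (T Tinv : X -> X) : Prop :=
  exists Em Ep, shifted_hyperbolic_split T Tinv Em Ep.

Definition Sigma (T Tinv : X -> X) (Em Ep : X -> Prop) : X -> Prop :=
  closure (span (fun y => exists (n : Z) (x : X), E0 T Em Ep x /\ y = zpow T Tinv n x)).

Definition BT (T Tinv : X -> X) (x : X) : Prop :=
  exists K, 0 < K /\
  exists k m : nat -> nat,
    (forall n, (0 < k n)%nat) /\ (forall n, (k n < k (S n))%nat) /\
    (forall n, (0 < m n)%nat) /\ (forall n, (m n < m (S n))%nat) /\
    (forall n, bnorm (Nat.iter (k n) T x) < K) /\
    (forall n, bnorm (Nat.iter (m n) Tinv x) < K).

End Defs.

(* Sigma is contained in the closure of B(T): a vector x of E0 has both
   half-orbits contracted to 0 (T x lies in Ep, x in Em); this property is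
   preserved by T, Tinv and linear combinations, so it holds on the span of
   the orbit of E0, and it implies membership in B(T).
   Conversely B(T) is contained in Sigma: by the Baire category theorem the
   projection onto Em along Ep is bounded.  If T^k x = a' + b' stays bounded
   for infinitely many k, pulling back by Tinv^k writes the Em-component of x
   as the small vector Tinv^k a' plus a vector in the span of the orbit of E0;
   the Ep-component is handled by the same argument with T, Tinv and Em, Ep
   exchanged.  Finally, for x0 <> 0 in E0 the vectors T^i x0 are linearly
   independent, since x0 lies in Em while T^i x0 lies in Ep for i >= 1. *)

From Stdlib Require Import Reals ZArith Lra Lia Classical ClassicalEpsilon.
Open Scope R_scope.

Arguments bsub {X}.

Section VectorAlgebra.
Variable X : Banach.
Implicit Types x y z : X.

Lemma addr0 x : badd x bzero = x.
Proof. rewrite badd_comm; apply badd_0l. Qed.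

Lemma addrN x : badd x (bopp x) = bzero.
Proof. rewrite badd_comm; apply badd_oppl. Qed.

Lemma addrK x y : bsub (badd y x) x = y.
Proof. unfold bsub; rewrite <- badd_assoc, addrN; apply addr0. Qed.

Lemma addrNK x y : badd (bsub y x) x = y.
Proof. unfold bsub; rewrite <- badd_assoc, badd_oppl; apply addr0. Qed.

Lemma opp_uniq x y : badd x y = bzero -> y = bopp x.
Proof.
  intros Hxy. rewrite <- (badd_0l _ y), <- (badd_oppl _ x), <- badd_assoc, Hxy.
  apply addr0.
Qed.

Lemma oppK x : bopp (bopp x) = x.
Proof. symmetry; apply opp_uniq, badd_oppl. Qed.

Lemma opp0 : bopp (@bzero X) = bzero.
Proof. symmetry; apply opp_uniq, addr0. Qed.

Lemma oppD x y : bopp (badd x y) = badd (bopp x) (bopp y).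
Proof.
  symmetry; apply opp_uniq.
  rewrite (badd_comm _ (bopp x)), badd_assoc, <- (badd_assoc _ x y), addrN, addr0.
  apply addrN.
Qed.

Lemma scal0 x : bscal 0 x = bzero.
Proof.
  rewrite <- (badd_0l _ (bscal 0 x)), <- (badd_oppl _ (bscal 0 x)) at 1.
  rewrite <- badd_assoc, <- bscal_adds, Rplus_0_r. apply badd_oppl.
Qed.

Lemma scalv0 a : bscal a (@bzero X) = bzero.
Proof. rewrite <- (scal0 bzero) at 1. rewrite bscal_assoc, Rmult_0_r; apply scal0. Qed.

Lemma scalN1 x : bscal (-1) x = bopp x.
Proof.
  apply opp_uniq. rewrite <- (bscal_1 _ x) at 1.
  rewrite <- bscal_adds, Rplus_opp_r. apply scal0.
Qed.

Lemma scal_inv s x : s <> 0 -> bscal (/ s) (bscal s x) = x.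
Proof. intros Hs. rewrite bscal_assoc, Rinv_l, bscal_1; auto. Qed.

Lemma norm0 : bnorm (@bzero X) = 0.
Proof. rewrite <- (scal0 bzero), bnorm_scal, Rabs_R0; ring. Qed.

Lemma normN x : bnorm (bopp x) = bnorm x.
Proof. rewrite <- scalN1, bnorm_scal, Rabs_left by lra; ring. Qed.

Lemma norm_ge0 x : 0 <= bnorm x.
Proof.
  pose proof (bnorm_triangle _ x (bopp x)) as Htri.
  rewrite addrN, norm0, normN in Htri. lra.
Qed.

Lemma subrr x : bsub x x = bzero.
Proof. apply addrN. Qed.

Lemma sub0r x : bsub x bzero = x.
Proof. unfold bsub; rewrite opp0; apply addr0. Qed.

Lemma sub_eq0 x y : bsub x y = bzero -> x = y.
Proof. intros Hxy. rewrite <- (addrNK y x), Hxy. apply badd_0l. Qed.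

Lemma dist_sym x y : bnorm (bsub x y) = bnorm (bsub y x).
Proof. unfold bsub. rewrite <- normN, oppD, oppK, badd_comm; auto. Qed.

Lemma dist_tri x y z : bnorm (bsub x z) <= bnorm (bsub x y) + bnorm (bsub y z).
Proof.
  replace (bsub x z) with (badd (bsub x y) (bsub y z)) by
    (unfold bsub; rewrite <- badd_assoc, (badd_assoc _ (bopp y)), badd_oppl, badd_0l; auto).
  apply bnorm_triangle.
Qed.

Lemma norm_sub_le x y : bnorm (bsub x y) <= bnorm x + bnorm y.
Proof. unfold bsub; rewrite <- (normN y). apply bnorm_triangle. Qed.

Lemma sub_addadd x y z w : bsub (badd x y) (badd z w) = badd (bsub x z) (bsub y w).
Proof.
  unfold bsub. rewrite oppD, <- !badd_assoc. f_equal.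
  rewrite !badd_assoc. f_equal. apply badd_comm.
Qed.

Lemma sub_shift x y z w : bsub y (bsub z w) = bsub (bsub (badd x y) z) (bsub x w).
Proof.
  change (bsub y (bsub z w) = bsub (badd (badd x y) (bopp z)) (badd x (bopp w))).
  rewrite sub_addadd, (badd_comm _ x y), addrK. unfold bsub. rewrite oppD. reflexivity.
Qed.

Lemma scal_sub a x y : bscal a (bsub x y) = bsub (bscal a x) (bscal a y).
Proof. unfold bsub. rewrite bscal_addv, <- !scalN1, !bscal_assoc, Rmult_comm; auto. Qed.

Lemma addrAC x y z : badd (badd x y) z = badd (badd x z) y.
Proof. rewrite <- !badd_assoc, (badd_comm _ y z); auto. Qed.

Lemma sub_sub_mid x y w l : bsub (bsub (badd (badd x y) w) l) y = badd (bsub x l) w.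
Proof.
  unfold bsub. rewrite (addrAC x y w), (addrAC _ y (bopp l)), <- badd_assoc, addrN, addr0.
  apply addrAC.
Qed.

Lemma addACA x y z w : badd (badd x y) (badd z w) = badd (badd x z) (badd y w).
Proof.
  rewrite <- !badd_assoc. f_equal.
  rewrite !badd_assoc. f_equal. apply badd_comm.
Qed.

End VectorAlgebra.

Section Subspaces.
Variable X : Banach.
Implicit Types (S E : X -> Prop) (x y : X).

Lemma subspace_sub E x y : is_subspace X E -> E x -> E y -> E (bsub x y).
Proof.
  intros [_ [Hadd Hscal]] Hx Hy. unfold bsub. rewrite <- scalN1. auto.
Qed.

Lemma closure_incl S x : S x -> closure X S x.
Proof. intros Hx eps Heps. exists x. rewrite subrr, norm0; auto. Qed.

Lemma closure_mono S E x : (forall y, S y -> E y) -> closure X S x -> closure X E x.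
Proof. intros HSE Hx eps Heps. destruct (Hx eps Heps) as [y [Hy Hxy]]. eauto. Qed.

Lemma closure_idem S x : closure X (closure X S) x -> closure X S x.
Proof.
  intros Hx eps Heps.
  destruct (Hx (eps / 2)) as [y [Hy Hxy]]; [lra|].
  destruct (Hy (eps / 2)) as [z [Hz Hyz]]; [lra|].
  exists z. split; auto. pose proof (dist_tri _ x y z). lra.
Qed.

Lemma closure_subspace S : is_subspace X S -> is_closed_subspace X (closure X S).
Proof.
  intros [H0 [Hadd Hscal]]. split; [split; [|split] | intros x; apply closure_idem].
  - apply closure_incl; auto.
  - intros x y Hx Hy eps Heps.
    destruct (Hx (eps / 2)) as [u [Hu Hxu]]; [lra|].
    destruct (Hy (eps / 2)) as [v [Hv Hyv]]; [lra|].
    exists (badd u v). split; auto. rewrite sub_addadd.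
    pose proof (bnorm_triangle _ (bsub x u) (bsub y v)). lra.
  - intros a x Hx eps Heps.
    assert (Ha : 0 < Rabs a + 1) by (pose proof (Rabs_pos a); lra).
    destruct (Hx (eps / (Rabs a + 1))) as [u [Hu Hxu]].
    { apply Rdiv_lt_0_compat; lra. }
    exists (bscal a u). split; auto.
    rewrite <- scal_sub, bnorm_scal.
    apply (Rmult_lt_compat_l (Rabs a + 1)) in Hxu; [|lra].
    replace ((Rabs a + 1) * (eps / (Rabs a + 1))) with eps in Hxu by (field; lra).
    pose proof (norm_ge0 _ (bsub x u)). nra.
Qed.

Lemma closed_limit E (u : nat -> X) (rho : nat -> R) l :
  is_closed X E -> (forall n, E (u n)) -> (forall n, bnorm (bsub l (u n)) <= rho n) ->
  (forall eps, 0 < eps -> exists N, rho N < eps) -> E l.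
Proof.
  intros HE Hu Hl Hrho. apply HE. intros eps Heps.
  destruct (Hrho eps Heps) as [N HN]. exists (u N). split; auto.
  specialize (Hl N). lra.
Qed.

Lemma span_subspace S : is_subspace X (span X S).
Proof. split; [apply span_0 | split; intros; [apply span_add | apply span_scal]; auto]. Qed.

Lemma span_least S E x :
  is_subspace X E -> (forall y, S y -> E y) -> span X S x -> E x.
Proof.
  intros [H0 [Hadd Hscal]] HSE Hx. induction Hx; auto.
Qed.

Lemma span_mono S E x : (forall y, S y -> E y) -> span X S x -> span X E x.
Proof.
  intros HSE. apply span_least; [apply span_subspace |]. intros y Hy. apply span_in; auto.
Qed.

Lemma span_invariant (T : X -> X) S x :
  is_linear X T -> (forall y, S y -> S (T y)) -> span X S x -> span X S (T x).
Proof.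
  intros [HA HS] HST Hx. induction Hx as [| | x y _ IHx _ IHy | a x _ IH].
  - rewrite <- (scal0 _ bzero) at 1. rewrite HS, scal0. apply span_0.
  - apply span_in; auto.
  - rewrite HA. apply span_add; auto.
  - rewrite HS. apply span_scal; auto.
Qed.

Lemma closed_subspace_ext S E :
  (forall x, S x <-> E x) -> is_closed_subspace X E -> is_closed_subspace X S.
Proof.
  intros HSE [[H0 [Hadd Hscal]] Hcl].
  split; [split; [|split] |].
  - apply HSE; auto.
  - intros x y Hx Hy. apply HSE, Hadd; apply HSE; auto.
  - intros a x Hx. apply HSE, Hscal, HSE; auto.
  - intros x Hx. apply HSE, Hcl. apply (closure_mono S); auto. intros y; apply HSE.
Qed.

End Subspaces.

Lemma pow_small c : 0 <= c < 1 ->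
  forall eps, 0 < eps -> exists N, forall n, (N <= n)%nat -> c ^ n < eps.
Proof.
  intros Hc eps Heps. destruct (pow_lt_1_zero c) with eps as [N HN]; auto.
  { rewrite Rabs_pos_eq; lra. }
  exists N. intros n Hn. specialize (HN n Hn).
  rewrite Rabs_pos_eq in HN; auto. apply pow_le; lra.
Qed.

Lemma geometric_small K : 0 <= K ->
  forall eps, 0 < eps -> exists N, K * (/ 2) ^ N < eps.
Proof.
  intros HK eps Heps.
  destruct (pow_small (/ 2) ltac:(lra) (eps / (K + 1))) as [N HN].
  { apply Rdiv_lt_0_compat; lra. }
  exists N. specialize (HN N (le_n N)). pose proof (pow_le (/ 2) N ltac:(lra)).
  apply (Rmult_lt_compat_l (K + 1)) in HN; [|lra].
  replace ((K + 1) * (eps / (K + 1))) with eps in HN by (field; lra). nra.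
Qed.

Section Completeness.
Variable X : Banach.

Lemma telescoping_limit (u : nat -> X) (rho : nat -> R) :
  (forall n, 0 <= rho n) ->
  (forall n, bnorm (bsub (u (S n)) (u n)) <= rho n - rho (S n)) ->
  (forall eps, 0 < eps -> exists N, rho N < eps) ->
  exists l, forall n, bnorm (bsub l (u n)) <= rho n.
Proof.
  intros Hpos Hstep Hsmall.
  assert (Htele : forall d n, bnorm (bsub (u (d + n)%nat) (u n)) <= rho n - rho (d + n)%nat).
  { induction d as [|d IH]; intros n; simpl.
    - rewrite subrr, norm0; lra.
    - pose proof (dist_tri _ (u (S (d + n))) (u (d + n)%nat) (u n)).
      pose proof (Hstep (d + n)%nat). specialize (IH n). lra. }
  assert (Hfar : forall m n, (n <= m)%nat ->
            bnorm (bsub (u m) (u n)) <= rho n /\ rho m <= rho n).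
  { intros m n Hnm. replace m with ((m - n) + n)%nat by lia.
    pose proof (Htele (m - n)%nat n). pose proof (Hpos ((m - n) + n)%nat).
    pose proof (norm_ge0 _ (bsub (u (m - n + n)%nat) (u n))). lra. }
  destruct (bcomplete X u) as [l Hl].
  { intros eps Heps. destruct (Hsmall eps Heps) as [N HN]. exists N. intros m n Hm Hn.
    change (bnorm (bsub (u m) (u n)) < eps).
    destruct (le_dec n m) as [Hnm | Hnm].
    - destruct (Hfar m n Hnm), (Hfar n N Hn). lra.
    - rewrite dist_sym. destruct (Hfar n m ltac:(lia)), (Hfar m N Hm). lra. }
  exists l. intros n. apply Rle_plus_epsilon. intros eps Heps.
  destruct (Hl eps Heps) as [N HN].
  specialize (HN (Nat.max N n) ltac:(lia)). change (bnorm (bsub (u (Nat.max N n)) l) < eps) in HN.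
  destruct (Hfar (Nat.max N n) n ltac:(lia)).
  pose proof (dist_tri _ l (u (Nat.max N n)) (u n)). rewrite dist_sym in HN. lra.
Qed.

Lemma ball_away (A : X -> Prop) y r :
  ~ (forall z, bnorm (bsub z y) < r -> closure X A z) ->
  exists z rho, bnorm (bsub z y) <= r /\ 0 < rho <= r /\
    forall w, A w -> rho < bnorm (bsub z w).
Proof.
  intros Hno. apply not_all_ex_not in Hno as [z Hz].
  apply imply_to_and in Hz as [Hzy Hz].
  apply not_all_ex_not in Hz as [eps Heps]. apply imply_to_and in Heps as [Heps Hfar].
  exists z, (Rmin r eps / 2).
  assert (0 < r) by (pose proof (norm_ge0 _ (bsub z y)); lra).
  split; [lra|]. split; [split; [apply Rdiv_lt_0_compat; [apply Rmin_glb_lt|]; lra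
                              | pose proof (Rmin_l r eps); lra] |].
  intros w Hw. apply Rnot_le_lt. intros Hle. apply Hfar. exists w. split; auto.
  pose proof (Rmin_r r eps). lra.
Qed.

(* Otherwise one builds nested balls, each
   avoiding one more of the sets; their common centre escapes all of them. *)
Lemma baire (A : nat -> X -> Prop) :
  (forall y, exists n, A n y) ->
  exists n y r, 0 < r /\ forall z, bnorm (bsub z y) < r -> closure X (A n) z.
Proof.
  intros Hcov. apply NNPP. intros Hno.
  assert (Hstep : forall n (p : X * R), exists q : X * R, 0 < snd p ->
            bnorm (bsub (fst q) (fst p)) <= snd p / 2 /\ 0 < snd q <= snd p / 2 /\
            forall w, A n w -> snd q < bnorm (bsub (fst q) w)).
  { intros n [y r]. destruct (Rlt_dec 0 r) as [Hr | Hr]; [| exists (y, r); simpl; lra].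
    destruct (ball_away (A n) y (r / 2)) as [z [rho Hz]].
    { intros Hball. apply Hno. exists n, y, (r / 2). split; [lra | auto]. }
    exists (z, rho). intros _. exact Hz. }
  destruct (choice _ (fun n => choice _ (Hstep n))) as [step Hspec]. clear Hstep.
  pose (p := fix p n := match n with O => (@bzero X, 1) | S k => step k (p k) end).
  set (y n := fst (p n)). set (r n := snd (p n)).
  assert (Hr : forall n, 0 < r n /\ r n <= (/ 2) ^ n).
  { induction n as [|n IH]; [unfold r; simpl; lra|].
    destruct (Hspec n (p n) (proj1 IH)) as [_ [Hrn _]].
    unfold r in *; simpl; lra. }
  destruct (telescoping_limit y r) as [l Hl].
  - intros n. apply Rlt_le, (Hr n).
  - intros n. destruct (Hspec n (p n) (proj1 (Hr n))) as [Hyn [Hrn _]].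
    unfold y, r in *; simpl; lra.
  - intros eps Heps. destruct (geometric_small 1 ltac:(lra) eps Heps) as [N HN].
    exists N. pose proof (Hr N). lra.
  - destruct (Hcov l) as [n Hn].
    destruct (Hspec n (p n) (proj1 (Hr n))) as [_ [_ Hfar]].
    specialize (Hfar l Hn). specialize (Hl (S n)). rewrite dist_sym in Hl.
    unfold y, r in *; simpl in *. lra.
Qed.

End Completeness.

Section BoundedProjection.
Variable X : Banach.
Variables Em Ep : X -> Prop.
Hypothesis HEm : is_subspace X Em.
Hypothesis HEp : is_subspace X Ep.
Hypothesis HEm_closed : is_closed X Em.
Hypothesis HEp_closed : is_closed X Ep.
Hypothesis Hdisj : forall x, Em x -> Ep x -> x = bzero.
Hypothesis Hcover : forall x, exists a b, Em a /\ Ep b /\ x = badd a b.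

Lemma decomposition_unique a1 b1 a2 b2 :
  Em a1 -> Ep b1 -> Em a2 -> Ep b2 -> badd a1 b1 = badd a2 b2 -> a1 = a2 /\ b1 = b2.
Proof.
  intros Ha1 Hb1 Ha2 Hb2 Heq.
  assert (Hsum : badd (bsub a1 a2) (bsub b1 b2) = bzero)
    by (rewrite <- sub_addadd, Heq; apply subrr).
  apply opp_uniq in Hsum.
  assert (Ha : bsub a1 a2 = bzero).
  { apply Hdisj; [apply subspace_sub; auto |].
    rewrite <- (oppK _ (bsub a1 a2)), <- Hsum, <- scalN1.
    apply HEp, subspace_sub; auto. }
  rewrite Ha, opp0 in Hsum. split; apply sub_eq0; auto.
Qed.

Definition bounded_part (n : nat) (y : X) : Prop :=
  exists a b, Em a /\ Ep b /\ y = badd a b /\ bnorm a <= INR n.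

Section BallInClosure.
Variables (N : nat) (y0 : X) (r : R).
Hypothesis Hball : forall z, bnorm (bsub z y0) < r -> closure X (bounded_part N) z.

(* Differences of approximations near y0 + z and near y0 approximate z. *)
Lemma approx_in_ball z delta : bnorm z < r -> 0 < delta ->
  exists a b, Em a /\ Ep b /\ bnorm a <= 2 * INR N /\ bnorm (bsub z (badd a b)) < delta.
Proof.
  intros Hz Hdelta.
  destruct (Hball (badd y0 z)) with (delta / 2) as [u1 [[a1 [b1 [Ha1 [Hb1 [-> Na1]]]]] Hu1]];
    [rewrite badd_comm, addrK; auto | lra |].
  destruct (Hball y0) with (delta / 2) as [u2 [[a2 [b2 [Ha2 [Hb2 [-> Na2]]]]] Hu2]];
    [rewrite subrr, norm0; pose proof (norm_ge0 _ z); lra | lra |].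
  exists (bsub a1 a2), (bsub b1 b2).
  split; [apply subspace_sub; auto |].
  split; [apply subspace_sub; auto |].
  split; [pose proof (norm_sub_le _ a1 a2); lra |].
  rewrite <- sub_addadd, (sub_shift _ y0). pose proof (norm_sub_le _ (bsub (badd y0 z) (badd a1 b1))
                                           (bsub y0 (badd a2 b2))). lra.
Qed.

(* By homogeneity, every vector is approximately decomposed with an Em-part
   of norm proportional to its own norm. *)
Lemma approx_everywhere z delta : 0 < r -> 0 < delta ->
  exists a b, Em a /\ Ep b /\ bnorm a <= 4 * INR N / r * bnorm z /\
    bnorm (bsub z (badd a b)) < delta.
Proof.
  intros Hr Hdelta.
  destruct (Req_dec (bnorm z) 0) as [Hz0 | Hz0].
  { exists bzero, bzero. rewrite Hz0, (bnorm_eq0 _ z Hz0), addr0, subrr, norm0.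
    split; [apply HEm | split; [apply HEp | lra]]. }
  pose proof (norm_ge0 _ z) as Hz.
  set (s := r / (2 * bnorm z)).
  assert (Hs : 0 < s) by (apply Rdiv_lt_0_compat; lra).
  destruct (approx_in_ball (bscal s z) (delta * s)) as [a [b [Ha [Hb [Na Hab]]]]].
  { rewrite bnorm_scal, Rabs_pos_eq by lra. unfold s. field_simplify; lra. }
  { nra. }
  exists (bscal (/ s) a), (bscal (/ s) b).
  assert (Hsinv : / s = 2 * bnorm z / r) by (unfold s; field; lra).
  assert (0 < / s) by (apply Rinv_0_lt_compat; lra).
  split; [apply HEm; auto | split; [apply HEp; auto | split]].
  - rewrite bnorm_scal, Rabs_pos_eq by lra.
    apply Rle_trans with (/ s * (2 * INR N)); [nra | right; rewrite Hsinv; field; lra].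
  - rewrite <- (scal_inv _ s z), <- bscal_addv, <- scal_sub, bnorm_scal, Rabs_pos_eq by lra.
    apply Rlt_le_trans with (/ s * (delta * s)); [nra | right; field; lra].
Qed.

End BallInClosure.

Section SuccessiveApproximation.
Variable M : R.
Hypothesis HM : 0 <= M.
Hypothesis Happrox : forall z delta, 0 < delta -> exists a b, Em a /\ Ep b /\
  bnorm a <= M * bnorm z /\ bnorm (bsub z (badd a b)) < delta.

(* Approximating the successive errors gives z = A n + B n + W n with A n, B n
   in Em, Ep, errors W n decaying geometrically and increments of A n bounded. *)
Lemma approximation_scheme z : 0 < bnorm z ->
  exists A B W : nat -> X, A O = bzero /\ forall n,
    Em (A n) /\ Ep (B n) /\ z = badd (badd (A n) (B n)) (W n) /\
    bnorm (W n) <= bnorm z * (/ 2) ^ n /\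
    bnorm (bsub (A (S n)) (A n)) <= M * bnorm z * (/ 2) ^ n.
Proof.
  intros Hz.
  assert (Hstep : forall (n : nat) (w : X), exists ab : X * X,
            Em (fst ab) /\ Ep (snd ab) /\ bnorm (fst ab) <= M * bnorm w /\
            bnorm (bsub w (badd (fst ab) (snd ab))) < bnorm z * (/ 2) ^ S n).
  { intros n w. destruct (Happrox w (bnorm z * (/ 2) ^ S n)) as [a [b Hab]].
    { pose proof (pow_lt (/ 2) (S n) ltac:(lra)). nra. }
    exists (a, b). exact Hab. }
  destruct (choice _ (fun n => choice _ (Hstep n))) as [step Hspec]. clear Hstep.
  pose (p := fix p n := match n with
    | O => (bzero, bzero, z)
    | S k => let '(a, b, w) := p k in
             (badd a (fst (step k w)), badd b (snd (step k w)),
              bsub w (badd (fst (step k w)) (snd (step k w))))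
    end).
  exists (fun n => fst (fst (p n))), (fun n => snd (fst (p n))), (fun n => snd (p n)).
  split; [reflexivity |].
  assert (Hinv : forall n, Em (fst (fst (p n))) /\ Ep (snd (fst (p n))) /\
            z = badd (badd (fst (fst (p n))) (snd (fst (p n)))) (snd (p n)) /\
            bnorm (snd (p n)) <= bnorm z * (/ 2) ^ n).
  { induction n as [|n IH]; simpl.
    - split; [apply HEm | split; [apply HEp | split; [rewrite !addr0, badd_0l; auto | lra]]].
    - destruct (p n) as [[a b] w]. simpl in *. destruct IH as [Ha [Hb [Hz' Hw]]].
      destruct (Hspec n w) as [Ha' [Hb' [_ Hw']]].
      split; [apply HEm; auto | split; [apply HEp; auto | split; [| lra]]].
      set (d := badd (fst (step n w)) (snd (step n w))).
      rewrite addACA, <- badd_assoc, (badd_comm _ d), addrNK. exact Hz'. }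
  intros n. destruct (Hinv n) as [Ha [Hb [Hz' Hw]]]. do 4 (split; auto).
  simpl. destruct (p n) as [[a b] w]. simpl in *.
  rewrite badd_comm, addrK. destruct (Hspec n w) as [_ [_ [Hstep _]]].
  pose proof (norm_ge0 _ w). nra.
Qed.

Lemma exact_decomposition z :
  exists a b, Em a /\ Ep b /\ z = badd a b /\ bnorm a <= 2 * M * bnorm z.
Proof.
  destruct (Req_dec (bnorm z) 0) as [Hz0 | Hz0].
  { exists bzero, bzero. rewrite Hz0, (bnorm_eq0 _ z Hz0), addr0, norm0.
    split; [apply HEm | split; [apply HEp | split; [auto | lra]]]. }
  pose proof (norm_ge0 _ z) as Hz.
  destruct (approximation_scheme z) as [A [B [W [HA0 HAB]]]]; [lra |].
  set (rho n := 2 * M * bnorm z * (/ 2) ^ n).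
  destruct (telescoping_limit _ A rho) as [a Ha].
  - intros n. unfold rho. apply Rmult_le_pos; [nra | apply pow_le; lra].
  - intros n. destruct (HAB n) as [_ [_ [_ [_ Hinc]]]]. unfold rho. simpl. lra.
  - apply geometric_small. nra.
  - exists a, (bsub z a).
    assert (Hrho : forall eps, 0 < eps -> exists N, rho N < eps)
      by (apply geometric_small; nra).
    split; [apply (closed_limit _ Em A rho); auto; intros n; apply HAB |].
    split; [apply (closed_limit _ Ep B (fun n => rho n + bnorm z * (/ 2) ^ n)) |].
    + auto.
    + intros n; apply HAB.
    + intros n. destruct (HAB n) as [_ [_ [Hzn [Hw _]]]].
      rewrite Hzn at 1. rewrite sub_sub_mid. pose proof (bnorm_triangle _ (bsub (A n) a) (W n)).
      rewrite dist_sym in H. pose proof (Ha n). lra.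
    + intros eps Heps. destruct (geometric_small (2 * M * bnorm z + bnorm z)) with eps
        as [N HN]; [nra | auto |]. exists N. unfold rho. lra.
    + split; [rewrite badd_comm, addrNK; auto |].
      specialize (Ha O). rewrite HA0, sub0r in Ha. unfold rho in Ha. simpl in Ha. lra.
Qed.

End SuccessiveApproximation.

Lemma projection_bounded :
  exists C, 0 <= C /\ forall a b, Em a -> Ep b -> bnorm a <= C * bnorm (badd a b).
Proof.
  destruct (baire X bounded_part) as [N [y0 [r [Hr Hball]]]].
  { intros y. destruct (Hcover y) as [a [b [Ha [Hb Hy]]]].
    destruct (INR_unbounded (bnorm a)) as [n Hn]. exists n, a, b. repeat split; auto. lra. }
  set (M := 4 * INR N / r).
  assert (HM : 0 <= M) by (unfold M; pose proof (pos_INR N);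
                           apply Rmult_le_pos; [lra | apply Rlt_le, Rinv_0_lt_compat; lra]).
  exists (2 * M). split; [lra |]. intros a b Ha Hb.
  destruct (exact_decomposition M HM (fun z delta => approx_everywhere N y0 r Hball z delta Hr)
              (badd a b)) as [a' [b' [Ha' [Hb' [Heq Hbound]]]]].
  destruct (decomposition_unique a b a' b' Ha Hb Ha' Hb' Heq) as [-> _]. exact Hbound.
Qed.

End BoundedProjection.

Section Iterates.
Variable X : Banach.
Implicit Types (T Tinv : X -> X) (x y : X).

Lemma linear0 T : is_linear X T -> T bzero = bzero.
Proof. intros [_ HS]. rewrite <- (scal0 _ bzero) at 1. rewrite HS; apply scal0. Qed.

Lemma linear_sub T x y : is_linear X T -> T (bsub x y) = bsub (T x) (T y).
Proof. intros [HA HS]. unfold bsub. rewrite HA, <- !scalN1, HS; auto. Qed.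

Lemma iter_linear T n : is_linear X T -> is_linear X (Nat.iter n T).
Proof.
  intros [HA HS]. induction n as [|n [IA IS]]; [split; reflexivity |].
  split; intros; simpl; [rewrite IA, HA | rewrite IS, HS]; auto.
Qed.

Lemma iter_cancel T Tinv n x :
  (forall y, Tinv (T y) = y) -> Nat.iter n Tinv (Nat.iter n T x) = x.
Proof.
  intros H. induction n as [|n IH]; auto.
  rewrite Nat.iter_succ_r, Nat.iter_succ, H; auto.
Qed.

Lemma contraction_iter T (E : X -> Prop) c :
  (forall x, E x -> E (T x)) -> (forall x, E x -> bnorm (T x) <= c * bnorm x) -> 0 <= c ->
  forall n v, E v -> E (Nat.iter n T v) /\ bnorm (Nat.iter n T v) <= c ^ n * bnorm v.
Proof.
  intros HE Hc Hc0 n v Hv. induction n as [|n [IE IN]]; simpl; [split; auto; lra |].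
  split; auto. specialize (Hc _ IE). nra.
Qed.

Definition vanishes (u : nat -> X) : Prop :=
  forall eps, 0 < eps -> exists N, forall n, (N <= n)%nat -> bnorm (u n) < eps.

Lemma vanishes_ext u v : (forall n, u n = v n) -> vanishes u -> vanishes v.
Proof.
  intros Huv Hu eps Heps. destruct (Hu eps Heps) as [N HN].
  exists N. intros n Hn. rewrite <- Huv. auto.
Qed.

Lemma vanishes_shift u : vanishes (fun n => u (S n)) <-> vanishes u.
Proof.
  split; intros H eps Heps; destruct (H eps Heps) as [N HN].
  - exists (S N). intros [|n] Hn; [lia | apply HN; lia].
  - exists N. intros n Hn. apply HN; lia.
Qed.

Definition forward_vanishing T y : Prop := vanishes (fun n => Nat.iter n T y).

Lemma forward_vanishing_step T y : forward_vanishing T (T y) <-> forward_vanishing T y.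
Proof.
  unfold forward_vanishing. rewrite <- (vanishes_shift (fun n => Nat.iter n T y)).
  split; apply vanishes_ext; intros n; rewrite Nat.iter_succ_r; auto.
Qed.

Lemma forward_vanishing_subspace T : is_linear X T -> is_subspace X (forward_vanishing T).
Proof.
  intros HT. pose proof (fun n => iter_linear T n HT) as HTn.
  split; [| split].
  - intros eps Heps. exists O. intros n _. rewrite linear0, norm0; auto.
  - intros x y Hx Hy eps Heps.
    destruct (Hx (eps / 2)) as [N1 H1]; [lra |]. destruct (Hy (eps / 2)) as [N2 H2]; [lra |].
    exists (Nat.max N1 N2). intros n Hn. rewrite (proj1 (HTn n)).
    specialize (H1 n ltac:(lia)). specialize (H2 n ltac:(lia)).
    pose proof (bnorm_triangle _ (Nat.iter n T x) (Nat.iter n T y)). lra.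
  - intros a x Hx eps Heps. assert (Ha : 0 < Rabs a + 1) by (pose proof (Rabs_pos a); lra).
    destruct (Hx (eps / (Rabs a + 1))) as [N HN]; [apply Rdiv_lt_0_compat; lra |].
    exists N. intros n Hn. rewrite (proj2 (HTn n)), bnorm_scal. specialize (HN n Hn).
    apply (Rmult_lt_compat_l (Rabs a + 1)) in HN; [| lra].
    replace ((Rabs a + 1) * (eps / (Rabs a + 1))) with eps in HN by (field; lra).
    pose proof (norm_ge0 _ (Nat.iter n T x)). nra.
Qed.

Lemma forward_vanishing_contraction T (E : X -> Prop) y :
  (forall x, E x -> E (T x)) -> uniform_contraction_on X T E -> E y -> forward_vanishing T y.
Proof.
  intros HE [c [Hc0 [Hc1 Hc]]] Hy eps Heps. pose proof (norm_ge0 _ y).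
  destruct (pow_small c (conj Hc0 Hc1) (eps / (bnorm y + 1))) as [N HN].
  { apply Rdiv_lt_0_compat; lra. }
  exists N. intros n Hn. destruct (contraction_iter T E c HE Hc Hc0 n y Hy) as [_ Hn'].
  specialize (HN n Hn). pose proof (pow_le c n Hc0).
  apply (Rmult_lt_compat_l (bnorm y + 1)) in HN; [| lra].
  replace ((bnorm y + 1) * (eps / (bnorm y + 1))) with eps in HN by (field; lra). nra.
Qed.

Definition two_sided_vanishing T Tinv y : Prop :=
  forward_vanishing T y /\ forward_vanishing Tinv y.

Lemma two_sided_vanishing_T T Tinv y : (forall x, Tinv (T x) = x) ->
  two_sided_vanishing T Tinv y -> two_sided_vanishing T Tinv (T y).
Proof.
  intros HTinvT [HF HB]. split; [apply forward_vanishing_step; auto |].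
  apply forward_vanishing_step. rewrite HTinvT. auto.
Qed.

Lemma two_sided_vanishing_BT T Tinv y : two_sided_vanishing T Tinv y -> BT X T Tinv y.
Proof.
  intros [HF HB]. destruct (HF 1 ltac:(lra)) as [N1 H1]. destruct (HB 1 ltac:(lra)) as [N2 H2].
  exists 1. split; [lra |]. exists (fun n => S (N1 + n)), (fun n => S (N2 + n)).
  repeat split; intros; try lia; [apply H1 | apply H2]; lia.
Qed.

End Iterates.

Section Orbit.
Variable X : Banach.
Variables (T Tinv : X -> X) (Em Ep : X -> Prop).

Definition orbit (y : X) : Prop :=
  exists k x, E0 X T Em Ep x /\ (y = Nat.iter k T x \/ y = Nat.iter k Tinv x).

Lemma orbit_zpow y :
  (exists (n : Z) (x : X), E0 X T Em Ep x /\ y = zpow X T Tinv n x) <-> orbit y.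
Proof.
  split.
  - intros [[|p|p] [x [Hx ->]]]; [exists O | exists (Pos.to_nat p) ..]; exists x; auto.
  - intros [[|k] [x [Hx [-> | ->]]]]; [exists Z0, x; auto .. | |];
      [exists (Zpos (Pos.of_succ_nat k)) | exists (Zneg (Pos.of_succ_nat k))];
      exists x; simpl; rewrite SuccNat2Pos.id_succ; auto.
Qed.

Lemma orbit_least (P : X -> Prop) y :
  (forall x, E0 X T Em Ep x -> P x) -> (forall x, P x -> P (T x)) ->
  (forall x, P x -> P (Tinv x)) -> orbit y -> P y.
Proof.
  intros H0 HT HTinv [k [x [Hx [-> | ->]]]];
    induction k as [|k IH]; simpl; auto.
Qed.

Hypothesis HTTinv : forall y, T (Tinv y) = y.

Lemma orbit_T y : orbit y -> orbit (T y).
Proof.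
  intros [k [x [Hx [-> | ->]]]].
  - exists (S k), x. auto.
  - destruct k as [|k]; [exists 1%nat, x; auto |].
    exists k, x. split; auto. right. simpl. rewrite HTTinv. reflexivity.
Qed.

Hypothesis HTinvT : forall y, Tinv (T y) = y.

Lemma orbit_Tinv y : orbit y -> orbit (Tinv y).
Proof.
  intros [k [x [Hx [-> | ->]]]].
  - destruct k as [|k]; [exists 1%nat, x; auto |].
    exists k, x. split; auto. left. simpl. rewrite HTinvT. reflexivity.
  - exists (S k), x. auto.
Qed.

End Orbit.

(* Orbits are symmetric: exchanging T with Tinv and Em with Ep yields the same
   set, since E0 for the exchanged data is T applied to E0. *)
Lemma orbit_swap (X : Banach) (T Tinv : X -> X) (Em Ep : X -> Prop) y :
  (forall x, T (Tinv x) = x) -> (forall x, Tinv (T x) = x) ->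
  orbit X Tinv T Ep Em y -> orbit X T Tinv Em Ep y.
Proof.
  intros HTTinv HTinvT. apply orbit_least.
  - intros x [Hxp Hxm]. rewrite <- (HTTinv x). apply orbit_T; auto.
    exists O, (Tinv x). split; [split; [auto | rewrite HTTinv; auto] | auto].
  - apply orbit_Tinv; auto.
  - apply orbit_T; auto.
Qed.

Section LinearCombinations.
Variable X : Banach.

Lemma lincomb_shift (c : nat -> R) (v : nat -> X) n :
  lincomb X c v (S n) =
  badd (bscal (c O) (v O)) (lincomb X (fun i => c (S i)) (fun i => v (S i)) n).
Proof.
  induction n as [|n IH]; simpl; [rewrite badd_0l, addr0; auto |].
  simpl in IH. rewrite IH, badd_assoc. auto.
Qed.

Lemma lincomb_linear (T : X -> X) c v n :
  is_linear X T -> T (lincomb X c v n) = lincomb X c (fun i => T (v i)) n.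
Proof.
  intros HT. induction n as [|n IH]; simpl; [apply linear0; auto |].
  rewrite (proj1 HT), (proj2 HT), IH. auto.
Qed.

Lemma lincomb_in (E : X -> Prop) c v n :
  is_subspace X E -> (forall i, E (v i)) -> E (lincomb X c v n).
Proof.
  intros [H0 [Hadd Hscal]] Hv. induction n; simpl; auto.
Qed.

End LinearCombinations.

Section Hyperbolic.
Variable X : Banach.
Variables (T Tinv : X -> X) (Em Ep : X -> Prop).
Hypothesis HT : is_linear X T.
Hypothesis HTinv : is_linear X Tinv.
Hypothesis HTTinv : forall x, T (Tinv x) = x.
Hypothesis HTinvT : forall x, Tinv (T x) = x.
Hypothesis HEm : is_subspace X Em.
Hypothesis HEp : is_subspace X Ep.
Hypothesis Hdisj : forall x, Em x -> Ep x -> x = bzero.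
Hypothesis Hcover : forall x, exists a b, Em a /\ Ep b /\ x = badd a b.
Hypothesis HEp_T : forall x, Ep x -> Ep (T x).
Hypothesis HEm_Tinv : forall x, Em x -> Em (Tinv x).
Hypothesis HcontrT : uniform_contraction_on X T Ep.
Hypothesis HcontrTinv : uniform_contraction_on X Tinv Em.

(* A vector of E0 is sent into Ep by T and lies in Em, so both of its
   half-orbits are contracted to 0. *)
Lemma E0_two_sided_vanishing x : E0 X T Em Ep x -> two_sided_vanishing X T Tinv x.
Proof.
  intros [Hxm Hxp]. split.
  - apply forward_vanishing_step, (forward_vanishing_contraction _ T Ep); auto.
  - apply (forward_vanishing_contraction _ Tinv Em); auto.
Qed.

Lemma span_orbit_two_sided_vanishing y :
  span X (orbit X T Tinv Em Ep) y -> two_sided_vanishing X T Tinv y.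
Proof.
  intros Hy. refine (span_least X _ _ y _ _ Hy).
  - destruct (forward_vanishing_subspace X T HT) as [F0 [Fadd Fscal]].
    destruct (forward_vanishing_subspace X Tinv HTinv) as [B0 [Badd Bscal]].
    split; [| split]; [split | intros ? ? [] []; split | intros ? ? []; split]; auto.
  - intros z Hz. apply (orbit_least X T Tinv Em Ep _ z); auto.
    + apply E0_two_sided_vanishing.
    + intros x Hx. apply two_sided_vanishing_T; auto.
    + intros x [HF HB]. destruct (two_sided_vanishing_T X Tinv T x HTTinv (conj HB HF)).
      split; auto.
Qed.

(* Pulling a vector of Ep back k times: its Em-component is generated by the
   orbit of E0, since each backward step feeds E0 with the Em-part of Tinv f. *)
Lemma backward_split k b : Ep b ->
  exists s f, span X (orbit X T Tinv Em Ep) s /\ Em s /\ Ep f /\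
    Nat.iter k Tinv b = badd s f.
Proof.
  intros Hb. induction k as [|k [s [f [Hs [Hsm [Hf Hsplit]]]]]].
  - exists bzero, b. split; [apply span_0 |]. split; [apply HEm |].
    split; [auto | rewrite badd_0l; auto].
  - destruct (Hcover (Tinv f)) as [a' [b' [Ha' [Hb' Hf']]]].
    assert (HE0 : E0 X T Em Ep a').
    { split; auto. replace a' with (bsub (Tinv f) b') by (rewrite Hf'; apply addrK).
      rewrite linear_sub, HTTinv; auto. apply subspace_sub; auto. }
    exists (badd (Tinv s) a'), b'. split; [| split; [apply HEm; auto | split; auto]].
    + apply span_add; [apply span_invariant; auto; apply orbit_Tinv; auto |].
      apply span_in. exists O, a'. auto.
    + rewrite Nat.iter_succ, Hsplit, (proj1 HTinv), Hf', badd_assoc. reflexivity.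
Qed.

(* If the forward orbit of x = a + b returns infinitely often to a ball of
   radius K, then its Em-component a is a limit of the span of the orbit of
   E0: pulling back T^k x = a' + b' gives a = Tinv^k a' + s with s in that
   span, and Tinv^k a' is small because a' is bounded by the projection. *)
Lemma Em_component_approx C K x a b :
  0 <= C -> (forall a b, Em a -> Ep b -> bnorm a <= C * bnorm (badd a b)) ->
  (forall N, exists k, (N <= k)%nat /\ bnorm (Nat.iter k T x) < K) ->
  Em a -> Ep b -> x = badd a b -> closure X (span X (orbit X T Tinv Em Ep)) a.
Proof.
  intros HC Hproj Hret Ha Hb Hx eps Heps.
  destruct HcontrTinv as [c [Hc0 [Hc1 Hc]]].
  assert (HK : 0 <= K).
  { destruct (Hret O) as [k [_ Hk]]. pose proof (norm_ge0 _ (Nat.iter k T x)). lra. }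
  destruct (pow_small c (conj Hc0 Hc1) (eps / (C * K + 1))) as [N HN].
  { apply Rdiv_lt_0_compat; nra. }
  destruct (Hret N) as [k [HNk Hk]].
  destruct (Hcover (Nat.iter k T x)) as [a' [b' [Ha' [Hb' Hy]]]].
  destruct (backward_split k b' Hb') as [s [f [Hs [Hsm [Hf Hsplit]]]]].
  destruct (contraction_iter _ Tinv Em c HEm_Tinv Hc Hc0 k a' Ha') as [Ha'k Ha'n].
  assert (Hx' : badd a b = badd (badd (Nat.iter k Tinv a') s) f).
  { rewrite <- Hx, <- badd_assoc, <- Hsplit, <- (proj1 (iter_linear _ Tinv k HTinv)), <- Hy.
    symmetry. apply iter_cancel; auto. }
  assert (Hsum : Em (badd (Nat.iter k Tinv a') s)) by (apply HEm; auto).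
  destruct (decomposition_unique X Em Ep HEm HEp Hdisj a b _ f Ha Hb Hsum Hf Hx') as [-> _].
  exists s. split; auto. rewrite addrK.
  pose proof (Hproj a' b' Ha' Hb') as Ha'C. rewrite <- Hy in Ha'C.
  specialize (HN k HNk). pose proof (pow_le c k Hc0). pose proof (norm_ge0 _ a').
  apply (Rmult_lt_compat_l (C * K + 1)) in HN; [| nra].
  replace ((C * K + 1) * (eps / (C * K + 1))) with eps in HN by (field; nra).
  assert (bnorm a' <= C * K) by nra. nra.
Qed.

(* For x0 <> 0 in E0 the vectors x0, T x0, T^2 x0, ... are linearly
   independent: x0 lies in Em while all the others lie in Ep. *)
Lemma orbit_independent x0 : E0 X T Em Ep x0 -> x0 <> bzero ->
  forall n, lin_indep X (fun i => Nat.iter i T x0) n.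
Proof.
  intros [Hx0m Hx0p] Hx0 n. induction n as [|n IH]; intros c Hc i Hi; [lia |].
  rewrite lincomb_shift in Hc. simpl in Hc.
  set (W := lincomb X (fun i => c (S i)) (fun i => Nat.iter (S i) T x0) n) in Hc.
  assert (HW : Ep W).
  { apply lincomb_in; auto. intros j. rewrite Nat.iter_succ_r.
    induction j; simpl; auto. }
  apply opp_uniq in Hc.
  assert (Hc0x : bscal (c O) x0 = bzero).
  { apply Hdisj; [apply HEm; auto |].
    rewrite <- (oppK _ (bscal (c O) x0)), <- Hc, <- scalN1. apply HEp; auto. }
  assert (Hc0 : c O = 0).
  { destruct (Req_dec (c O) 0) as [| Hne]; auto. exfalso. apply Hx0.
    rewrite <- (scal_inv _ (c O) x0), Hc0x by auto. apply scalv0. }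
  rewrite Hc0x, opp0 in Hc.
  assert (Hrest : lincomb X (fun i => c (S i)) (fun i => Nat.iter i T x0) n = bzero).
  { rewrite <- (HTinvT (lincomb X _ (fun i => Nat.iter i T x0) n)), (lincomb_linear _ T) by auto.
    unfold W in Hc. simpl in Hc. rewrite Hc. apply linear0; auto. }
  destruct i as [| i]; auto. apply (IH _ Hrest). lia.
Qed.

End Hyperbolic.

Lemma in_Laut_swap (X : Banach) (T Tinv : X -> X) :
  in_Laut X T Tinv -> in_Laut X Tinv T.
Proof. unfold in_Laut. tauto. Qed.

Lemma split_swap (X : Banach) (T Tinv : X -> X) (Em Ep : X -> Prop) :
  generalized_hyperbolic_split X T Tinv Em Ep -> generalized_hyperbolic_split X Tinv T Ep Em.
Proof.
  intros (HEm & HEp & Hdisj & Hcover & HEp_T & HEm_Tinv & HcontrT & HcontrTinv).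
  do 3 (split; auto). split; [| split; auto].
  intros x. destruct (Hcover x) as [a [b [Ha [Hb ->]]]].
  exists b, a. rewrite badd_comm. auto.
Qed.

Lemma increasing_ge (f : nat -> nat) : (forall n, (f n < f (S n))%nat) -> forall n, (n <= f n)%nat.
Proof. intros Hf n. induction n; [lia | specialize (Hf n); lia]. Qed.

Lemma BT_returns (X : Banach) (T Tinv : X -> X) x : BT X T Tinv x ->
  exists K, (forall N, exists k, (N <= k)%nat /\ bnorm (Nat.iter k T x) < K) /\
            (forall N, exists m, (N <= m)%nat /\ bnorm (Nat.iter m Tinv x) < K).
Proof.
  intros (K & _ & k & m & _ & Hk & _ & Hm & HkK & HmK). exists K.
  split; intros N; [exists (k N) | exists (m N)]; split; auto; apply increasing_ge; auto.
Qed.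

Lemma Em_component_in_orbit_closure (X : Banach) (T Tinv : X -> X) (Em Ep : X -> Prop) K x a b :
  in_Laut X T Tinv -> generalized_hyperbolic_split X T Tinv Em Ep ->
  (forall N, exists k, (N <= k)%nat /\ bnorm (Nat.iter k T x) < K) ->
  Em a -> Ep b -> x = badd a b -> closure X (span X (orbit X T Tinv Em Ep)) a.
Proof.
  intros (HT & _ & HTinv & _ & HTTinv & HTinvT)
    ([HEm HEm_closed] & [HEp HEp_closed] & Hdisj & Hcover & HEp_T & HEm_Tinv & _ & HcontrTinv).
  destruct (projection_bounded X Em Ep HEm HEp HEm_closed HEp_closed Hdisj Hcover)
    as [C [HC Hproj]].
  apply (Em_component_approx X T Tinv Em Ep) with (C := C) (K := K) (b := b); auto.
Qed.

(* B(T) is contained in the shifted subspace: the Em-component of x in B(T)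
   is handled by the forward returns, its Ep-component by the backward ones
   (the same statement for the exchanged data). *)
Lemma BT_in_orbit_closure (X : Banach) (T Tinv : X -> X) (Em Ep : X -> Prop) x :
  in_Laut X T Tinv -> generalized_hyperbolic_split X T Tinv Em Ep ->
  BT X T Tinv x -> closure X (span X (orbit X T Tinv Em Ep)) x.
Proof.
  intros HL HG HBT. destruct (BT_returns X T Tinv x HBT) as [K [Hfwd Hbwd]].
  pose proof HG as (_ & _ & _ & Hcover & _).
  destruct (Hcover x) as [a [b [Ha [Hb Hx]]]].
  destruct (closure_subspace X _ (span_subspace X (orbit X T Tinv Em Ep)))
    as [[_ [Hadd _]] _].
  rewrite Hx. apply Hadd.
  - apply (Em_component_in_orbit_closure X T Tinv Em Ep K x a b); auto.
  - apply (closure_mono _ (span X (orbit X Tinv T Ep Em))).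
    + intros y. apply span_mono. intros z. apply orbit_swap; apply HL.
    + apply (Em_component_in_orbit_closure X Tinv T Ep Em K x b a);
        [apply in_Laut_swap | apply split_swap | | | | rewrite badd_comm]; auto.
Qed.

Lemma closure_BT_Sigma (X : Banach) (T Tinv : X -> X) (Em Ep : X -> Prop) :
  in_Laut X T Tinv -> generalized_hyperbolic_split X T Tinv Em Ep ->
  forall x, closure X (BT X T Tinv) x <-> Sigma X T Tinv Em Ep x.
Proof.
  intros HL HG x. unfold Sigma. split; intros Hx.
  - apply closure_idem, (closure_mono _ (BT X T Tinv)); auto. intros y Hy.
    apply (closure_mono _ (span X (orbit X T Tinv Em Ep))); [| apply BT_in_orbit_closure; auto].
    intros z. apply span_mono. intros w. apply orbit_zpow.
  - revert Hx. apply closure_mono. intros y Hy. apply two_sided_vanishing_BT.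
    destruct HL as (HT & _ & HTinv & _ & HTTinv & HTinvT).
    destruct HG as ([HEm _] & [HEp _] & _ & _ & HEp_T & HEm_Tinv & HcontrT & HcontrTinv).
    apply (span_orbit_two_sided_vanishing X T Tinv Em Ep); auto.
    revert Hy. apply span_mono. intros w. apply orbit_zpow.
Qed.

Theorem theorem3 (X : Banach) (T Tinv : X -> X) (Em Ep : X -> Prop) :
  in_Laut X T Tinv ->
  shifted_hyperbolic_split X T Tinv Em Ep ->
  is_closed_subspace X (closure X (BT X T Tinv)) /\
  infinite_dimensional X (closure X (BT X T Tinv)) /\
  (forall x, closure X (BT X T Tinv) x <-> Sigma X T Tinv Em Ep x).
Proof.
  intros HL [HG [x0 [Hx0 Hx0nz]]].
  pose proof (closure_BT_Sigma X T Tinv Em Ep HL HG) as Heq.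
  split; [| split; [| exact Heq]].
  - apply (closed_subspace_ext _ _ _ Heq), closure_subspace, span_subspace.
  - intros n. exists (fun i => Nat.iter i T x0). split.
    + intros i _. apply Heq, closure_incl, span_in, orbit_zpow. exists i, x0. auto.
    + destruct HL as (HT & _ & HTinv & _ & HTTinv & HTinvT).
      destruct HG as ([HEm _] & [HEp _] & Hdisj & _ & HEp_T & _).
      apply (orbit_independent X T Tinv Em Ep); auto.
Qed.
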